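(* Let $a>0$ and let $f$ be a real-valued smooth function on an open interval containing $[-a,a]$. Suppose $f^{(n)}(t)\neq0$ for all integers $n\ge0$ and all $t\in[-a,a]$, and that there is a constant $M$ such that $\left|\frac{f^{(n+1)}(t)}{f^{(n)}(t)}\right|\le M$ for all $n\ge0$ and all $t\in[-a,a]$. Then the series $\hat f$ converges uniformly on $[-a,a]$ and $\hat f(t)=f(0)$ for all $t\in[-a,a]$.
   Context: For a smooth function $f$ on an interval containing the point $t$, $\hat f(t)$ denotes the series $\hat f(t):=\sum_{n=0}^{\infty}\frac{(-1)^n}{n!}\,t^n f^{(n)}(t)$; convergence of $\hat f$ refers to convergence of its partial sums, and $\hat f(t)$ also denotes the sum. *)

From Stdlib Require Import Reals Lra Arith Factorial.
Open Scope R_scope.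

(* This expresses "f is smooth on (b,c) with f^(n) = D n there". *)
Definition smooth_with_derivs (D : nat -> R -> R) (b c : R) : Prop :=
  forall (n : nat) (t : R), b < t < c -> derivable_pt_lim (D n) t (D (S n) t).

Definition fhat_partial (D : nat -> R -> R) (N : nat) (t : R) : R :=
  sum_f_R0 (fun k => (-1) ^ k / INR (fact k) * t ^ k * D k t) N.

Definition unif_cv_on (F : nat -> R -> R) (g : R -> R) (l u : R) : Prop :=
  forall eps : R, 0 < eps ->
    exists N : nat, forall (n : nat) (t : R), (N <= n)%nat -> l <= t <= u ->
      Rabs (F n t - g t) < eps.

From Stdlib Require Import Reals Lra Factorial.
Open Scope R_scope.

(* Write h_N for the N-th partial sum of \hat f.  Differentiating term by term,
   the sum telescopes: h_N'(t) = (-1)^N / N! * t^N * f^(N+1)(t), and h_N(0) = f(0).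
   On [-a,a] the ratio hypothesis gives |f^(n)| <= K M^n, where K bounds |f| on
   the compact interval.  Hence |h_N'(s)| <= K M (aM)^N / N! for |s| <= a, and the
   mean value theorem between 0 and t yields
       |h_N(t) - f(0)| <= K a M * (aM)^N / N!   for all t in [-a,a].
   Since (aM)^N / N! -> 0, the convergence h_N -> f(0) is uniform. *)

Lemma mvt_abs_bound (f f' : R -> R) (x y B : R) :
  (forall s, Rmin x y <= s <= Rmax x y -> derivable_pt_lim f s (f' s)) ->
  (forall s, Rmin x y <= s <= Rmax x y -> Rabs (f' s) <= B) ->
  Rabs (f y - f x) <= B * Rabs (y - x).
Proof.
  intros hder hbd.
  destruct (Rtotal_order x y) as [Hlt | [Heq | Hgt]].
  - rewrite Rmin_left, Rmax_right in * by lra.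
    destruct (MVT_cor2 f f' x y Hlt hder) as [xi [-> Hxi]].
    rewrite Rabs_mult.
    apply Rmult_le_compat_r; [apply Rabs_pos | apply hbd; lra].
  - subst y. rewrite !Rminus_diag, Rabs_R0, Rmult_0_r. lra.
  - rewrite Rmin_right, Rmax_left in * by lra.
    destruct (MVT_cor2 f f' y x Hgt hder) as [xi [Hxi1 Hxi]].
    rewrite <- Rabs_Ropp, Ropp_minus_distr, Hxi1, Rabs_mult.
    rewrite <- (Rabs_Ropp (y - x)), Ropp_minus_distr.
    apply Rmult_le_compat_r; [apply Rabs_pos | apply hbd; lra].
Qed.

Lemma unif_cv_of_pow_fact_bound (F : nat -> R -> R) (g : R -> R) (l u C x : R) :
  (forall n t, l <= t <= u -> Rabs (F n t - g t) <= C * (x ^ n / INR (fact n))) ->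
  unif_cv_on F g l u.
Proof.
  intros hbd eps Heps.
  set (C' := Rabs C + 1).
  assert (HC' : 0 < C') by (unfold C'; pose proof (Rabs_pos C); lra).
  destruct (cv_speed_pow_fact x (eps / C') ltac:(apply Rdiv_lt_0_compat; lra))
    as [N HN].
  exists N. intros n t Hn Ht.
  assert (Hsmall := HN n Hn). unfold R_dist in Hsmall. rewrite Rminus_0_r in Hsmall.
  apply Rle_lt_trans with (1 := hbd n t Ht).
  apply Rle_lt_trans with (C' * Rabs (x ^ n / INR (fact n))).
  - apply Rle_trans with (Rabs (C * (x ^ n / INR (fact n)))); [apply RRle_abs|].
    rewrite Rabs_mult. apply Rmult_le_compat_r; [apply Rabs_pos | unfold C'; lra].
  - apply Rmult_lt_compat_l with (r := C') in Hsmall; [|lra].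
    replace (C' * (eps / C')) with eps in Hsmall by (field; lra). exact Hsmall.
Qed.

Lemma derivable_abs_bounded (f f' : R -> R) (b c l u : R) :
  b < l -> l <= u -> u < c ->
  (forall t, b < t < c -> derivable_pt_lim f t (f' t)) ->
  exists K, forall s, l <= s <= u -> Rabs (f s) <= K.
Proof.
  intros hbl hlu huc hder.
  destruct (continuity_ab_maj (fun t => Rabs (f t)) l u hlu) as [x0 [Hx0 _]].
  - intros t Ht. apply (continuity_pt_comp f Rabs).
    + apply derivable_continuous_pt. exists (f' t). apply hder. lra.
    + apply Rcontinuity_abs.
  - exists (Rabs (f x0)). exact Hx0.
Qed.

Lemma derivs_geometric_bound (D : nat -> R -> R) (l u K M : R) :
  (forall n s, l <= s <= u -> D n s <> 0) ->
  (forall n s, l <= s <= u -> Rabs (D (S n) s / D n s) <= M) ->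
  (forall s, l <= s <= u -> Rabs (D 0%nat s) <= K) ->
  forall n s, l <= s <= u -> Rabs (D n s) <= K * M ^ n.
Proof.
  intros hnz hratio hK n s Hs. induction n as [|n IH].
  - rewrite pow_O, Rmult_1_r. exact (hK s Hs).
  - replace (D (S n) s) with (D (S n) s / D n s * D n s)
      by (field; exact (hnz n s Hs)).
    rewrite Rabs_mult, <- tech_pow_Rmult.
    replace (K * (M * M ^ n)) with (M * (K * M ^ n)) by ring.
    apply Rmult_le_compat; auto using Rabs_pos.
Qed.

Lemma fhat_term_deriv (D : nat -> R -> R) (b c : R) (k : nat) (t : R) :
  smooth_with_derivs D b c -> b < t < c ->
  derivable_pt_lim (fun t => (-1) ^ k / INR (fact k) * t ^ k * D k t) t
    ((-1) ^ k / INR (fact k) * (INR k * t ^ pred k * D k t + t ^ k * D (S k) t)).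
Proof.
  intros hs ht.
  set (coef := (-1) ^ k / INR (fact k)).
  pose proof (derivable_pt_lim_scal (fun y => y ^ k) coef t _
                (derivable_pt_lim_pow t k)) as Hpow.
  pose proof (derivable_pt_lim_mult _ (D k) t _ _ Hpow (hs k t ht)) as Hprod.
  unfold mult_fct, mult_real_fct in Hprod.
  replace (coef * (INR k * t ^ pred k * D k t + t ^ k * D (S k) t))
    with (coef * (INR k * t ^ pred k) * D k t + coef * t ^ k * D (S k) t) by ring.
  exact Hprod.
Qed.

Lemma fhat_partial_deriv (D : nat -> R -> R) (b c : R) (N : nat) (t : R) :
  smooth_with_derivs D b c -> b < t < c ->
  derivable_pt_lim (fhat_partial D N) t
    ((-1) ^ N / INR (fact N) * t ^ N * D (S N) t).
Proof.
  intros hs ht. induction N as [|N IH].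
  - pose proof (fhat_term_deriv D b c 0 t hs ht) as H0.
    replace ((-1) ^ 0 / INR (fact 0) * t ^ 0 * D 1%nat t) with
      ((-1) ^ 0 / INR (fact 0) * (INR 0 * t ^ pred 0 * D 0%nat t + t ^ 0 * D 1%nat t))
      by (simpl; field).
    exact H0.
  - pose proof (derivable_pt_lim_plus _ _ t _ _ IH
                  (fhat_term_deriv D b c (S N) t hs ht)) as HS.
    unfold plus_fct in HS.
    replace ((-1) ^ S N / INR (fact (S N)) * t ^ S N * D (S (S N)) t) with
      ((-1) ^ N / INR (fact N) * t ^ N * D (S N) t +
       (-1) ^ S N / INR (fact (S N)) *
       (INR (S N) * t ^ pred (S N) * D (S N) t + t ^ S N * D (S (S N)) t)).
    + exact HS.
    + rewrite fact_simpl, mult_INR. simpl pred.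
      pose proof (INR_fact_neq_0 N).
      assert (INR (S N) <> 0) by (apply not_0_INR; discriminate).
      simpl pow. field. split; assumption.
Qed.

Lemma fhat_partial_at_0 (D : nat -> R -> R) (N : nat) :
  fhat_partial D N 0 = D 0%nat 0.
Proof.
  induction N as [|N IH]; unfold fhat_partial in *; simpl sum_f_R0.
  - simpl. field.
  - rewrite IH. simpl pow. ring.
Qed.

Lemma fhat_deriv_term_bound (D : nat -> R -> R) (a K M : R) (N : nat) (s : R) :
  0 <= a -> -a <= s <= a -> Rabs (D (S N) s) <= K * M ^ S N ->
  Rabs ((-1) ^ N / INR (fact N) * s ^ N * D (S N) s)
    <= K * M * ((a * M) ^ N / INR (fact N)).
Proof.
  intros ha Hs HD.
  pose proof (INR_fact_lt_0 N) as Hf.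
  unfold Rdiv. rewrite !Rabs_mult, Rabs_inv, pow_1_abs, (Rabs_right (INR (fact N)))
    by lra.
  rewrite <- RPow_abs, Rpow_mult_distr.
  assert (Hpow : Rabs s ^ N <= a ^ N).
  { apply pow_incr. split; [apply Rabs_pos | apply Rabs_le; lra]. }
  assert (0 < / INR (fact N)) by (apply Rinv_0_lt_compat; lra).
  pose proof (pow_le (Rabs s) N (Rabs_pos s)).
  replace (K * M * (a ^ N * M ^ N * / INR (fact N)))
    with (1 * / INR (fact N) * a ^ N * (K * M ^ S N)) by (simpl; ring).
  apply Rmult_le_compat; auto using Rabs_pos.
  - apply Rmult_le_pos; lra.
  - apply Rmult_le_compat_l; lra.
Qed.

Theorem theorem4 (a b c : R) (D : nat -> R -> R)
  (ha : 0 < a) (hb : b < - a) (hc : a < c)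
  (hsmooth : smooth_with_derivs D b c)
  (hnz : forall (n : nat) (t : R), - a <= t <= a -> D n t <> 0)
  (hM : exists M : R, forall (n : nat) (t : R), - a <= t <= a ->
          Rabs (D (S n) t / D n t) <= M) :
  exists g : R -> R,
    unif_cv_on (fhat_partial D) g (- a) a /\
    (forall t : R, - a <= t <= a -> g t = D 0%nat 0).
Proof.
  destruct hM as [M hM].
  destruct (derivable_abs_bounded (D 0%nat) (D 1%nat) b c (- a) a)
    as [K hK]; try lra.
  { intros t Ht. exact (hsmooth 0%nat t Ht). }
  pose proof (derivs_geometric_bound D (- a) a K M hnz hM hK) as hgeom.
  exists (fun _ => D 0%nat 0). split; [|reflexivity].
  apply unif_cv_of_pow_fact_bound with (C := K * M * a) (x := a * M).
  intros N t Ht.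
  rewrite <- (fhat_partial_at_0 D N).
  assert (Hbetween : forall s, Rmin 0 t <= s <= Rmax 0 t -> - a <= s <= a).
  { intros s Hs. unfold Rmin, Rmax in Hs; destruct Rle_dec; lra. }
  apply Rle_trans with (K * M * ((a * M) ^ N / INR (fact N)) * Rabs (t - 0)).
  - apply mvt_abs_bound with
      (f' := fun s => (-1) ^ N / INR (fact N) * s ^ N * D (S N) s).
    + intros s Hs. apply (fhat_partial_deriv D b c N s hsmooth).
      pose proof (Hbetween s Hs); lra.
    + intros s Hs. apply fhat_deriv_term_bound; [lra | auto | auto].
  - rewrite Rminus_0_r.
    assert (Hdiff : 0 <= K * M * ((a * M) ^ N / INR (fact N))).
    { apply Rle_trans with (2 := fhat_deriv_term_bound D a K M N 0 ltac:(lra)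
                                   ltac:(lra) (hgeom (S N) 0 ltac:(lra))).
      apply Rabs_pos. }
    replace (K * M * a * ((a * M) ^ N / INR (fact N)))
      with (K * M * ((a * M) ^ N / INR (fact N)) * a) by ring.
    apply Rmult_le_compat_l; [exact Hdiff | apply Rabs_le; lra].
Qed.
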